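(* Let $a_1,b_1,a'_1,b'_1,a_2,b_2,a'_2,b'_2\ge 0$ be such that the vectors $v_1=(a'_1-a_1,\,b'_1-b_1)$ and $v_2=(a'_2-a_2,\,b'_2-b_2)$ are linearly independent, and let $\epsilon\in(0,1)$. For rate functions $k_1(t),k_2(t),k_3(t),k_4(t)$ consider the system on $\mathbb{R}^2_{>0}$ $$\begin{pmatrix}\dot x\\ \dot y\end{pmatrix}=\big(k_1(t)x^{a_1}y^{b_1}-k_2(t)x^{a'_1}y^{b'_1}\big)v_1+\big(k_3(t)x^{a_2}y^{b_2}-k_4(t)x^{a'_2}y^{b'_2}\big)v_2 .$$ Consider the curves $\mathcal{C}_1: x^{a'_1-a_1}y^{b'_1-b_1}=\frac{1}{\epsilon^2}$, $\mathcal{C}_2: x^{a'_1-a_1}y^{b'_1-b_1}=\epsilon^2$, $\mathcal{C}_3: x^{a'_2-a_2}y^{b'_2-b_2}=\epsilon^2$, $\mathcal{C}_4: x^{a'_2-a_2}y^{b'_2-b_2}=\frac{1}{\epsilon^2}$ in $\mathbb{R}^2_{>0}$, and let $A=\mathcal{C}_2\cap\mathcal{C}_4$, $B=\mathcal{C}_1\cap\mathcal{C}_4$, $C=\mathcal{C}_1\cap\mathcal{C}_3$, $D=\mathcal{C}_2\cap\mathcal{C}_3$ (each a single point). Let $\mathbf{x}(t)$ be a solution with $\mathbf{x}(0)\in\mathbb{R}^2_{>0}$. Then: (i) if $k_1\equiv\epsilon,k_2\equiv\frac1\epsilon,k_3\equiv\frac1\epsilon,k_4\equiv\epsilon$, then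 $\lim_{t\to\infty}\mathbf{x}(t)=A$; (ii) if $k_1\equiv\frac1\epsilon,k_2\equiv\epsilon,k_3\equiv\frac1\epsilon,k_4\equiv\epsilon$, then $\lim_{t\to\infty}\mathbf{x}(t)=B$; (iii) if $k_1\equiv\frac1\epsilon,k_2\equiv\epsilon,k_3\equiv\epsilon,k_4\equiv\frac1\epsilon$, then $\lim_{t\to\infty}\mathbf{x}(t)=C$; (iv) if $k_1\equiv\epsilon,k_2\equiv\frac1\epsilon,k_3\equiv\epsilon,k_4\equiv\frac1\epsilon$, then $\lim_{t\to\infty}\mathbf{x}(t)=D$.
   Context: The system is the mass-action system of the reaction network $a_1X+b_1Y\rightleftharpoons a'_1X+b'_1Y$ (forward rate $k_1$, backward rate $k_2$) and $a_2X+b_2Y\rightleftharpoons a'_2X+b'_2Y$ (forward rate $k_3$, backward rate $k_4$); in the variable-$k$ setting the rates are allowed to vary in time with values in $[\epsilon,1/\epsilon]$, here they are fixed constants. *)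

From Stdlib Require Import Reals.
From Coquelicot Require Import Coquelicot.
Open Scope R_scope.

Definition mono (x y a b : R) : R := Rpower x a * Rpower y b.

Definition lin_indep2 (u1 u2 w1 w2 : R) : Prop :=
  forall c d : R, c * u1 + d * w1 = 0 -> c * u2 + d * w2 = 0 -> c = 0 /\ d = 0.

(* Reaction rates of the two reversible reactions
   a1 X + b1 Y <-> a1' X + b1' Y  (k1, k2),  a2 X + b2 Y <-> a2' X + b2' Y  (k3, k4). *)
Definition flux1 (a1 b1 a1' b1' k1 k2 x y : R) : R :=
  k1 * mono x y a1 b1 - k2 * mono x y a1' b1'.

Definition is_solution (a1 b1 a1' b1' a2 b2 a2' b2' k1 k2 k3 k4 : R)
    (x y : R -> R) : Prop :=
  (forall t, 0 <= t -> 0 < x t /\ 0 < y t) /\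
  (forall t, 0 < t ->
     is_derive x t (flux1 a1 b1 a1' b1' k1 k2 (x t) (y t) * (a1' - a1)
                  + flux1 a2 b2 a2' b2' k3 k4 (x t) (y t) * (a2' - a2)) /\
     is_derive y t (flux1 a1 b1 a1' b1' k1 k2 (x t) (y t) * (b1' - b1)
                  + flux1 a2 b2 a2' b2' k3 k4 (x t) (y t) * (b2' - b2))).

Definition converges_to_intersection (a1 b1 a1' b1' a2 b2 a2' b2' c1 c2 : R)
    (x y : R -> R) : Prop :=
  exists p q : R, 0 < p /\ 0 < q /\
    mono p q (a1' - a1) (b1' - b1) = c1 /\
    mono p q (a2' - a2) (b2' - b2) = c2 /\
    is_lim x p_infty p /\ is_lim y p_infty q.

From Stdlib Require Import Reals Lra Psatz Classical.
From Coquelicot Require Import Coquelicot.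
Open Scope R_scope.

(* Work in the logarithmic gaps [u = ln x - ln xs], [w = ln y - ln ys] to the positive
   equilibrium [(xs, ys)] at which each reaction is balanced, [k1 x^a1 y^b1 = k2 x^a1' y^b1']
   and [k3 x^a2 y^b2 = k4 x^a2' y^b2']; linear independence of the reaction vectors makes it
   unique. The free energy [G = xs h(u) + ys h(w)], [h(u) = e^u (u - 1) + 1], is a Lyapunov
   function: [G' = - sum_i P_i (e^phi_i - 1) phi_i <= 0], where [P_i > 0] is the forward rate
   of reaction [i] and [phi_i] the log-ratio of its backward and forward rates. Hence [u] and [w] are bounded above.
   They are bounded below by a barrier argument: once both gaps cannot be very negative
   simultaneously (which [G] rules out), a very negative gap in [x] with a bounded gap in
   [y] forces [x' > 0], and symmetrically. On the resulting compact region [G] and [-G'] are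
   both comparable to [u^2 + w^2], so [G' <= - c G], [G] decays to [0] and the solution
   converges to [(xs, ys)]. In the four cases [k1/k2] and [k3/k4] are [eps^2] or [/eps^2],
   which puts [(xs, ys)] at [A], [B], [C] or [D]. *)

Lemma exp_le_exp x y : x <= y -> exp x <= exp y.
Proof.
  intros [Hlt | ->]; [now apply Rlt_le, exp_increasing | apply Rle_refl].
Qed.

Lemma exp_mul_exp_opp u : exp u * exp (- u) = 1.
Proof. rewrite <- exp_plus, Rplus_opp_r. apply exp_0. Qed.

Lemma is_derive_continuity_pt (f : R -> R) x l : is_derive f x l -> continuity_pt f x.
Proof.
  intros Hf. apply continuity_pt_filterlim.
  apply (ex_derive_continuous (K := R_AbsRing) (V := R_NormedModule)).
  now exists l.
Qed.

Lemma MVT_closed (f df : R -> R) a b : a <= b ->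
  (forall t, a <= t <= b -> is_derive f t (df t)) ->
  exists c, a <= c <= b /\ f b - f a = df c * (b - a).
Proof.
  intros Hab Hd.
  destruct (MVT_gen f a b df) as [c [Hc E]];
    rewrite ?Rmin_left, ?Rmax_right in * by lra.
  - intros t Ht. apply Hd. lra.
  - intros t Ht. apply (is_derive_continuity_pt _ _ (df t)), Hd. lra.
  - now exists c.
Qed.

Lemma diff_le_of_derive_le (f df : R -> R) a b M : a <= b ->
  (forall t, a <= t <= b -> is_derive f t (df t)) ->
  (forall t, a <= t <= b -> df t <= M) -> f b - f a <= M * (b - a).
Proof.
  intros Hab Hd HM. destruct (MVT_closed f df a b Hab Hd) as [c [Hc ->]].
  apply Rmult_le_compat_r; [lra | now apply HM].
Qed.

Lemma diff_ge_of_derive_ge (f df : R -> R) a b m : a <= b ->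
  (forall t, a <= t <= b -> is_derive f t (df t)) ->
  (forall t, a <= t <= b -> m <= df t) -> m * (b - a) <= f b - f a.
Proof.
  intros Hab Hd Hm. destruct (MVT_closed f df a b Hab Hd) as [c [Hc ->]].
  apply Rmult_le_compat_r; [lra | now apply Hm].
Qed.

Lemma lt_of_derive_pos (f df : R -> R) a b : a < b ->
  (forall t, a <= t <= b -> is_derive f t (df t)) ->
  (forall t, a <= t <= b -> 0 < df t) -> f a < f b.
Proof.
  intros Hab Hd Hpos. destruct (MVT_closed f df a b ltac:(lra) Hd) as [c [Hc E]].
  specialize (Hpos c Hc). nra.
Qed.

Lemma nonincreasing_of_derive_nonpos (f df : R -> R) t0 :
  (forall t, t0 <= t -> is_derive f t (df t)) -> (forall t, t0 <= t -> df t <= 0) ->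
  forall s t, t0 <= s <= t -> f t <= f s.
Proof.
  intros Hd Hneg s t Hst.
  pose proof (diff_le_of_derive_le f df s t 0 ltac:(lra)
    (fun r Hr => Hd r ltac:(lra)) (fun r Hr => Hneg r ltac:(lra))).
  lra.
Qed.

(* If [h t < Rmin (h t0) d], a minimiser [c] of [h] on [t0, t] lies in [(t0, t]] with
   [h c < d]; then [dh > 0] just left of [c], so [h] is smaller there than at [c]. *)
Lemma lower_barrier (h dh : R -> R) t0 d :
  (forall t, t0 <= t -> is_derive h t (dh t)) ->
  (forall t, t0 <= t -> h t < d -> 0 < dh t) ->
  forall t, t0 <= t -> Rmin (h t0) d <= h t.
Proof.
  intros Hd Hpos t Ht.
  destruct (Rle_lt_dec (Rmin (h t0) d) (h t)) as [|Hlow]; [assumption | exfalso].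
  pose proof (Rmin_l (h t0) d). pose proof (Rmin_r (h t0) d).
  destruct (continuity_ab_min h t0 t Ht) as [c [Hmin Hc]].
  { intros s Hs. apply (is_derive_continuity_pt _ _ (dh s)), Hd. lra. }
  assert (Hct : h c <= h t) by (apply Hmin; lra).
  assert (Hc0 : t0 < c).
  { destruct (Req_dec c t0) as [->|]; lra. }
  destruct (proj1 (continuity_pt_locally h c)
              (is_derive_continuity_pt _ _ _ (Hd c ltac:(lra)))
              (mkposreal (d - h c) ltac:(lra))) as [delta Hdelta].
  pose (s := c - Rmin delta (c - t0) / 2).
  assert (Hdelta0 : 0 < Rmin delta (c - t0)) by (apply Rmin_glb_lt; [apply cond_pos | lra]).
  pose proof (Rmin_l delta (c - t0)). pose proof (Rmin_r delta (c - t0)).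
  assert (Hsc : h s < h c).
  { apply lt_of_derive_pos with dh; [unfold s; lra | |].
    - intros r Hr. apply Hd. unfold s in Hr. lra.
    - intros r Hr. apply Hpos; [unfold s in Hr; lra |].
      assert (Hball : Rabs (h r - h c) < d - h c).
      { apply (Hdelta r). change (Rabs (r - c) < delta).
        apply Rabs_lt_between. unfold s in Hr. lra. }
      apply Rabs_lt_between in Hball. lra. }
  assert (h c <= h s) by (apply Hmin; unfold s; lra).
  lra.
Qed.

Lemma ln_lower_barrier (z dz : R -> R) t0 d :
  (forall t, t0 <= t -> 0 < z t) ->
  (forall t, t0 <= t -> is_derive z t (dz t)) ->
  (forall t, t0 <= t -> ln (z t) < d -> 0 < dz t) ->
  forall t, t0 <= t -> Rmin (ln (z t0)) d <= ln (z t).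
Proof.
  intros Hpos Hd Hin.
  apply (lower_barrier (fun t => ln (z t)) (fun t => dz t / z t)).
  - intros t Ht. specialize (Hpos t Ht).
    auto_derive; [repeat split; [exists (dz t); now apply Hd | lra] |].
    replace (Derive (fun x => z x) t) with (dz t) by (symmetry; now apply is_derive_unique, Hd).
    field. lra.
  - intros t Ht Hlt. apply Rdiv_lt_0_compat; [now apply Hin | now apply Hpos].
Qed.

Lemma is_lim_0_of_derive_le_neg (G dG : R -> R) t0 c : 0 < c ->
  (forall t, t0 <= t -> is_derive G t (dG t)) ->
  (forall t, t0 <= t -> 0 <= G t) ->
  (forall t, t0 <= t -> dG t <= - c * G t) ->
  is_lim G p_infty 0.
Proof.
  intros Hc Hd Hnn Hdec.
  assert (Hmono : forall s t, t0 <= s <= t -> G t <= G s).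
  { apply (nonincreasing_of_derive_nonpos G dG t0 Hd).
    intros t Ht. specialize (Hdec t Ht). specialize (Hnn t Ht). nra. }
  apply is_lim_spec. intros eps. pose proof (cond_pos eps) as Heps.
  pose (T := t0 + G t0 / (c * eps) + 1).
  assert (HT : t0 + G t0 / (c * eps) < T) by (unfold T; lra).
  assert (Hq : 0 <= G t0 / (c * eps)).
  { apply Rdiv_le_0_compat; [apply Hnn; lra | nra]. }
  destruct (Rlt_le_dec (G T) eps) as [Hsmall | Hbig].
  - exists T. intros t Ht. rewrite Rminus_0_r, Rabs_right by (apply Rle_ge, Hnn; lra).
    pose proof (Hmono T t ltac:(lra)). lra.
  - exfalso.
    assert (Hdrop : G T - G t0 <= - c * eps * (T - t0)).
    { apply (diff_le_of_derive_le G dG); [lra | intros r Hr; apply Hd; lra |].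
      intros r Hr. pose proof (Hdec r ltac:(lra)). pose proof (Hmono r T ltac:(lra)). nra. }
    assert (Hprod : c * eps * (G t0 / (c * eps)) = G t0) by (field; lra).
    assert (0 < c * eps * (T - t0 - G t0 / (c * eps))) by (apply Rmult_lt_0_compat; nra).
    pose proof (Hnn T ltac:(lra)). nra.
Qed.

Lemma is_lim_of_sq_le (f g : R -> R) (l C t0 : R) :
  (forall t, t0 <= t -> (f t - l) ^ 2 <= C * g t) ->
  is_lim g p_infty 0 -> is_lim f p_infty l.
Proof.
  intros Hsq Hg. apply is_lim_spec. intros eps. pose proof (cond_pos eps) as Heps.
  assert (Hk : 0 < eps ^ 2 / (Rabs C + 1)).
  { apply Rdiv_lt_0_compat; [nra | pose proof (Rabs_pos C); lra]. }
  destruct (proj2 (is_lim_spec g p_infty 0) Hg (mkposreal _ Hk)) as [M HM].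
  exists (Rmax t0 M). intros t Ht. simpl in HM.
  specialize (HM t ltac:(pose proof (Rmax_r t0 M); lra)).
  rewrite Rminus_0_r in HM.
  assert (HC : C * g t <= Rabs C * Rabs (g t)).
  { rewrite <- Rabs_mult. apply Rle_abs. }
  assert (Hlt : Rabs C * Rabs (g t) < eps ^ 2).
  { apply Rle_lt_trans with ((Rabs C + 1) * Rabs (g t)).
    - pose proof (Rabs_pos (g t)). nra.
    - apply (Rmult_lt_compat_l (Rabs C + 1)) in HM; [| pose proof (Rabs_pos C); lra].
      field_simplify in HM; [lra | pose proof (Rabs_pos C); lra]. }
  pose proof (Hsq t ltac:(pose proof (Rmax_l t0 M); lra)).
  apply Rabs_lt_between. split; nra.
Qed.

Lemma is_lim_of_is_lim_ln (z : R -> R) (c : R) :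
  (forall t, 0 <= t -> 0 < z t) ->
  is_lim (fun t => ln (z t)) p_infty c -> is_lim z p_infty (exp c).
Proof.
  intros Hpos Hln. apply (is_lim_ext_loc (fun t => exp (ln (z t)))).
  - exists 0. intros t Ht. apply exp_ln, Hpos. lra.
  - apply (is_lim_comp_continuous (fun t => ln (z t)) exp p_infty c Hln).
    apply continuous_exp.
Qed.

Lemma nonneg_of_derive_sign (h g : R -> R) L u :
  h 0 = 0 ->
  (forall s, Rabs s <= L -> is_derive h s (s * g s)) ->
  (forall s, Rabs s <= L -> 0 <= g s) ->
  Rabs u <= L -> 0 <= h u.
Proof.
  intros H0 Hd Hg Hu. apply Rabs_le_between in Hu.
  assert (Hin : forall s, Rmin 0 u <= s <= Rmax 0 u -> Rabs s <= L).
  { intros s Hs. apply Rabs_le_between.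
    pose proof (Rmin_l 0 u). pose proof (Rmin_r 0 u).
    pose proof (Rmax_l 0 u). pose proof (Rmax_r 0 u).
    destruct (Rle_lt_dec 0 u);
      [rewrite Rmin_left, Rmax_right in Hs | rewrite Rmin_right, Rmax_left in Hs]; lra. }
  destruct (Rle_lt_dec 0 u) as [Hpos | Hneg].
  - rewrite Rmin_left, Rmax_right in Hin by lra.
    pose proof (diff_ge_of_derive_ge h (fun s => s * g s) 0 u 0 Hpos
      (fun s Hs => Hd s (Hin s Hs))
      (fun s Hs => Rmult_le_pos _ _ (proj1 Hs) (Hg s (Hin s Hs)))).
    lra.
  - rewrite Rmin_right, Rmax_left in Hin by lra.
    assert (Hdh : h 0 - h u <= 0 * (0 - u)).
    { apply (diff_le_of_derive_le h (fun s => s * g s)); [lra | |].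
      - intros s Hs. apply Hd, Hin. lra.
      - intros s Hs. pose proof (Hg s (Hin s Hs)). nra. }
    lra.
Qed.

Lemma is_derive_sub_sq (f : R -> R) s df c :
  is_derive f s df -> is_derive (fun s => f s - c / 2 * s ^ 2) s (df - c * s).
Proof.
  intros Hf. apply (is_derive_minus f (fun s => c / 2 * s ^ 2)); [exact Hf |].
  auto_derive; [exact I | field].
Qed.

Lemma sq_bounds_of_derive (f g : R -> R) L m M u :
  f 0 = 0 ->
  (forall s, Rabs s <= L -> is_derive f s (s * g s)) ->
  (forall s, Rabs s <= L -> m <= g s <= M) ->
  Rabs u <= L -> m / 2 * u ^ 2 <= f u <= M / 2 * u ^ 2.
Proof.
  intros H0 Hd Hg Hu. split.
  - enough (0 <= f u - m / 2 * u ^ 2) by lra.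
    apply (nonneg_of_derive_sign (fun s => f s - m / 2 * s ^ 2) (fun s => g s - m) L u);
      [rewrite H0; ring | | | exact Hu].
    + intros s Hs. replace (s * (g s - m)) with (s * g s - m * s) by ring.
      now apply is_derive_sub_sq, Hd.
    + intros s Hs. pose proof (Hg s Hs). lra.
  - enough (0 <= - (f u - M / 2 * u ^ 2)) by lra.
    apply (nonneg_of_derive_sign (fun s => - (f s - M / 2 * s ^ 2)) (fun s => M - g s) L u);
      [rewrite H0; ring | | | exact Hu].
    + intros s Hs. replace (s * (M - g s)) with (- (s * g s - M * s)) by ring.
      now apply (is_derive_opp (fun s => f s - M / 2 * s ^ 2)), is_derive_sub_sq, Hd.
    + intros s Hs. pose proof (Hg s Hs). lra.
Qed.

(* [exp c * helm (ln z - c) = z (ln z - c - 1) + exp c] is the free-energy term of a species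
   of concentration [z] whose equilibrium concentration is [exp c]. *)
Definition helm u := exp u * (u - 1) + 1.

Lemma is_derive_helm u : is_derive helm u (u * exp u).
Proof. unfold helm. auto_derive; [exact I | ring]. Qed.

Lemma helm_nonneg u : 0 <= helm u.
Proof.
  unfold helm. pose proof (exp_ineq1_le (- u)). pose proof (exp_mul_exp_opp u).
  pose proof (exp_pos u). nra.
Qed.

Lemma helm_lt_1 u : u < 1 -> helm u < 1.
Proof. intros Hu. unfold helm. pose proof (exp_pos u). nra. Qed.

Lemma helm_ge_id u : 1 <= u -> u <= helm u.
Proof. intros Hu. unfold helm. pose proof (exp_ineq1_le u). nra. Qed.

(* From [exp (- u) >= (1 - u / 2) ^ 2]. *)
Lemma one_sub_helm_le u : u <= 0 -> (2 - u) * (1 - helm u) <= 4.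
Proof.
  intros Hu. unfold helm.
  pose proof (exp_ineq1_le (- u / 2)). pose proof (exp_mul_exp_opp u).
  pose proof (exp_pos u).
  assert (Hsq : exp (- u) = exp (- u / 2) * exp (- u / 2))
    by (rewrite <- exp_plus; f_equal; field).
  nra.
Qed.

Lemma one_sub_helm_lt e u : 0 < e -> u < - (4 / e) -> 1 - helm u < e.
Proof.
  intros He Hu.
  assert (HN : 0 < 4 / e) by (apply Rdiv_lt_0_compat; lra).
  pose proof (one_sub_helm_le u ltac:(lra)). pose proof (helm_lt_1 u ltac:(lra)).
  assert (Hprod : 4 / e * e = 4) by (field; lra).
  nra.
Qed.

Lemma helm_pair_deep p q g : 0 < p -> 0 < q -> 0 < g ->
  exists N, 0 <= N /\
    forall u w, u < - N -> w < - N -> p + q - g < p * helm u + q * helm w.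
Proof.
  intros Hp Hq Hg. pose (e := g / (p + q)).
  assert (He : 0 < e) by (apply Rdiv_lt_0_compat; lra).
  exists (4 / e). split; [apply Rlt_le, Rdiv_lt_0_compat; lra |].
  intros u w Hu Hw.
  pose proof (one_sub_helm_lt e u He Hu). pose proof (one_sub_helm_lt e w He Hw).
  assert (Hsum : (p + q) * e = g) by (unfold e; field; lra).
  nra.
Qed.

Lemma helm_sq_bounds u L : Rabs u <= L ->
  exp (- L) / 2 * u ^ 2 <= helm u <= exp L / 2 * u ^ 2.
Proof.
  apply (sq_bounds_of_derive helm exp); [unfold helm; rewrite exp_0; ring | |].
  - intros s _. apply is_derive_helm.
  - intros s Hs. apply Rabs_le_between in Hs. split; apply exp_le_exp; lra.
Qed.

Lemma le_of_helm_le c g K : 0 < c -> c * helm g <= K -> g <= 1 + K / c.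
Proof.
  intros Hc HK. pose proof (helm_nonneg g).
  assert (HKc : helm g <= K / c) by (apply Rle_div_r; lra).
  destruct (Rlt_le_dec g 1); [| pose proof (helm_ge_id g ltac:(assumption))]; lra.
Qed.

Lemma sq_le_of_helm_le g L c K : Rabs g <= L -> 0 < c -> c * helm g <= K ->
  g ^ 2 <= 2 * exp L / c * K.
Proof.
  intros Hg Hc HK. destruct (helm_sq_bounds g L Hg) as [Hlow _].
  assert (HKc : helm g <= K / c) by (apply Rle_div_r; lra).
  pose proof (exp_pos L). pose proof (exp_mul_exp_opp L).
  replace (2 * exp L / c * K) with (2 * exp L * (K / c)) by (field; lra).
  replace (g ^ 2) with (2 * exp L * (exp (- L) / 2 * g ^ 2)) by (field_simplify; nra).
  apply Rmult_le_compat_l; lra.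
Qed.

Lemma is_derive_helm_log (z : R -> R) t dz c : 0 < z t -> is_derive z t dz ->
  is_derive (fun t => exp c * helm (ln (z t) - c)) t ((ln (z t) - c) * dz).
Proof.
  intros Hz Hd. unfold helm. auto_derive; [repeat split; auto; now exists dz |].
  replace (Derive (fun x => z x) t) with dz by (symmetry; now apply is_derive_unique).
  rewrite exp_plus, exp_ln by exact Hz.
  transitivity (exp c * exp (- c) * ((ln (z t) - c) * dz)); [field; lra |].
  rewrite exp_mul_exp_opp. ring.
Qed.

Lemma flux1_log_form a b a' b' kp km s r us ws :
  0 < kp -> 0 < km -> 0 < s -> 0 < r ->
  (a' - a) * us + (b' - b) * ws = ln kp - ln km ->
  flux1 a b a' b' kp km s r =
  kp * exp (a * ln s + b * ln r) *
    (1 - exp ((a' - a) * (ln s - us) + (b' - b) * (ln r - ws))).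
Proof.
  intros Hkp Hkm Hs Hr Heq. unfold flux1, mono, Rpower.
  rewrite <- (exp_ln kp), <- (exp_ln km) by assumption.
  rewrite Rmult_minus_distr_l, Rmult_1_r, <- !exp_plus.
  do 2 f_equal. lra.
Qed.

Lemma exp_sub_1_mul_ge phi P : Rabs phi <= P -> exp (- P) * phi ^ 2 <= (exp phi - 1) * phi.
Proof.
  intros HP. apply Rabs_le_between in HP.
  pose proof (exp_pos phi). pose proof (exp_pos (- P)). pose proof (pow2_ge_0 phi).
  destruct (Rle_lt_dec 0 phi).
  - pose proof (exp_ineq1_le phi). pose proof (exp_le_exp (- P) 0 ltac:(lra)).
    rewrite exp_0 in *. nra.
  - pose proof (exp_ineq1_le (- phi)). pose proof (exp_mul_exp_opp phi).
    pose proof (exp_le_exp (- P) phi ltac:(lra)).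
    assert (1 - exp phi >= - phi * exp phi) by nra.
    nra.
Qed.

Lemma exp_sub_1_mul_nonneg phi : 0 <= (exp phi - 1) * phi.
Proof.
  pose proof (exp_sub_1_mul_ge phi (Rabs phi) (Rle_refl _)).
  pose proof (exp_pos (- Rabs phi)). pose proof (pow2_ge_0 phi). nra.
Qed.

Lemma one_sub_exp_mul_pos a phi : a * phi < 0 -> 0 < (1 - exp phi) * a.
Proof.
  intros H. destruct (Rle_lt_dec 0 a).
  - assert (phi < 0) by nra. pose proof (exp_increasing phi 0 ltac:(lra)).
    rewrite exp_0 in *. nra.
  - assert (0 < phi) by nra. pose proof (exp_increasing 0 phi ltac:(lra)).
    rewrite exp_0 in *. nra.
Qed.

Lemma flux_term_pos p a b u w W : 0 < p -> a <> 0 -> Rabs w <= W ->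
  W * (Rabs b / Rabs a) < - u -> 0 < p * (1 - exp (a * u + b * w)) * a.
Proof.
  intros Hp Ha Hw Hu. rewrite Rmult_assoc. apply Rmult_lt_0_compat; [exact Hp |].
  apply one_sub_exp_mul_pos.
  assert (Hpa : 0 < Rabs a) by now apply Rabs_pos_lt.
  assert (Hab : a * b * w <= Rabs a * Rabs b * W).
  { rewrite <- Rabs_mult. apply Rle_trans with (Rabs (a * b * w)); [apply Rle_abs |].
    rewrite Rabs_mult. apply Rmult_le_compat_l; [apply Rabs_pos | exact Hw]. }
  assert (Haa : a * a = Rabs a * Rabs a)
    by (rewrite <- Rabs_mult; symmetry; apply Rabs_right; nra).
  assert (Hsc : Rabs a * (W * (Rabs b / Rabs a)) = Rabs b * W) by (field; lra).
  assert (Hlt : Rabs a * (Rabs a * (W * (Rabs b / Rabs a))) < Rabs a * (Rabs a * - u)).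
  { apply Rmult_lt_compat_l; [exact Hpa |]. apply Rmult_lt_compat_l; assumption. }
  rewrite Hsc in Hlt.
  replace (a * (a * u + b * w)) with (a * a * u + a * b * w) by ring.
  rewrite Haa. lra.
Qed.

Lemma flux_sum_pos_far a1 b1 a2 b2 W : a1 * b2 - a2 * b1 <> 0 ->
  exists L, forall p1 p2 u w, 0 < p1 -> 0 < p2 -> Rabs w <= W -> u < - L ->
    0 < p1 * (1 - exp (a1 * u + b1 * w)) * a1 + p2 * (1 - exp (a2 * u + b2 * w)) * a2.
Proof.
  intros Hdet. exists (Rmax (W * (Rabs b1 / Rabs a1)) (W * (Rabs b2 / Rabs a2))).
  intros p1 p2 u w Hp1 Hp2 Hw Hu.
  pose proof (Rmax_l (W * (Rabs b1 / Rabs a1)) (W * (Rabs b2 / Rabs a2))).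
  pose proof (Rmax_r (W * (Rabs b1 / Rabs a1)) (W * (Rabs b2 / Rabs a2))).
  assert (Hpos1 : a1 <> 0 -> 0 < p1 * (1 - exp (a1 * u + b1 * w)) * a1)
    by (intros Ha1; apply (flux_term_pos _ _ _ _ _ W); auto; lra).
  assert (Hpos2 : a2 <> 0 -> 0 < p2 * (1 - exp (a2 * u + b2 * w)) * a2)
    by (intros Ha2; apply (flux_term_pos _ _ _ _ _ W); auto; lra).
  destruct (Req_dec a1 0) as [-> | Ha1]; [| destruct (Req_dec a2 0) as [-> | Ha2]].
  - assert (Ha2 : a2 <> 0) by (intros ->; apply Hdet; ring).
    pose proof (Hpos2 Ha2). lra.
  - pose proof (Hpos1 Ha1). lra.
  - pose proof (Hpos1 Ha1). pose proof (Hpos2 Ha2). lra.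
Qed.

Lemma Rabs_lin_le a b s r B : Rabs s <= B -> Rabs r <= B ->
  Rabs (a * s + b * r) <= (Rabs a + Rabs b) * B.
Proof.
  intros Hs Hr. eapply Rle_trans; [apply Rabs_triang |]. rewrite !Rabs_mult.
  pose proof (Rabs_pos a). pose proof (Rabs_pos b).
  pose proof (Rmult_le_compat_l _ _ _ (Rabs_pos a) Hs).
  pose proof (Rmult_le_compat_l _ _ _ (Rabs_pos b) Hr). lra.
Qed.

(* With [phi1 = a1 u + b1 w], [phi2 = a2 u + b2 w] and [D] the determinant, Cramer's rule gives
   [D u = b2 phi1 - b1 phi2] and [D w = a1 phi2 - a2 phi1]; then Cauchy-Schwarz. *)
Lemma det_sq_mul_norm_le a1 b1 a2 b2 u w :
  (a1 * b2 - a2 * b1) ^ 2 * (u ^ 2 + w ^ 2) <=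
  (a1 ^ 2 + b1 ^ 2 + a2 ^ 2 + b2 ^ 2) *
    ((a1 * u + b1 * w) ^ 2 + (a2 * u + b2 * w) ^ 2).
Proof.
  pose proof (pow2_ge_0 (b2 * (a2 * u + b2 * w) + b1 * (a1 * u + b1 * w))).
  pose proof (pow2_ge_0 (a1 * (a1 * u + b1 * w) + a2 * (a2 * u + b2 * w))).
  pose proof (pow2_ge_0 (a1 * (a2 * u + b2 * w))).
  nra.
Qed.

Lemma det_neq_0_of_lin_indep2 u1 u2 w1 w2 : lin_indep2 u1 u2 w1 w2 -> u1 * w2 - w1 * u2 <> 0.
Proof.
  intros H Hd.
  destruct (H w2 (- u2)) as [H1 H2]; [lra | lra |].
  destruct (H w1 (- u1)) as [H3 H4]; [lra | lra |].
  destruct (H 1 0) as [Hf _]; [subst; lra | subst; lra | lra].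
Qed.

Lemma mono_exp s r a b : mono (exp s) (exp r) a b = exp (a * s + b * r).
Proof. unfold mono, Rpower. rewrite !ln_exp, exp_plus. f_equal; f_equal; ring. Qed.

Section MassAction.

Variables a1 b1 a1' b1' a2 b2 a2' b2' k1 k2 k3 k4 : R.
Hypotheses (k1_pos : 0 < k1) (k2_pos : 0 < k2) (k3_pos : 0 < k3) (k4_pos : 0 < k4).

Let al1 := a1' - a1.
Let be1 := b1' - b1.
Let al2 := a2' - a2.
Let be2 := b2' - b2.
Let D := al1 * be2 - al2 * be1.
Hypothesis D_neq_0 : D <> 0.

Let us := ((ln k1 - ln k2) * be2 - (ln k3 - ln k4) * be1) / D.
Let ws := (al1 * (ln k3 - ln k4) - al2 * (ln k1 - ln k2)) / D.

Lemma equilibrium1 : al1 * us + be1 * ws = ln k1 - ln k2.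
Proof. unfold us, ws. pose proof D_neq_0. unfold D in *. field. assumption. Qed.

Lemma equilibrium2 : al2 * us + be2 * ws = ln k3 - ln k4.
Proof. unfold us, ws. pose proof D_neq_0. unfold D in *. field. assumption. Qed.

Variables x y : R -> R.
Hypothesis sol : is_solution a1 b1 a1' b1' a2 b2 a2' b2' k1 k2 k3 k4 x y.

Let u t := ln (x t) - us.
Let w t := ln (y t) - ws.
Let ph1 t := al1 * u t + be1 * w t.
Let ph2 t := al2 * u t + be2 * w t.
Let P1 t := k1 * exp (a1 * ln (x t) + b1 * ln (y t)).
Let P2 t := k3 * exp (a2 * ln (x t) + b2 * ln (y t)).
Let F1 t := P1 t * (1 - exp (ph1 t)).
Let F2 t := P2 t * (1 - exp (ph2 t)).
Let G t := exp us * helm (u t) + exp ws * helm (w t).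
Let dG t := F1 t * ph1 t + F2 t * ph2 t.

Lemma xy_pos t : 0 <= t -> 0 < x t /\ 0 < y t.
Proof. apply (proj1 sol). Qed.

Lemma P_pos t : 0 < P1 t /\ 0 < P2 t.
Proof. split; apply Rmult_lt_0_compat; auto; apply exp_pos. Qed.

Lemma fluxes_eq t : 0 <= t ->
  flux1 a1 b1 a1' b1' k1 k2 (x t) (y t) = F1 t /\
  flux1 a2 b2 a2' b2' k3 k4 (x t) (y t) = F2 t.
Proof.
  intros Ht. destruct (xy_pos t Ht).
  split; apply flux1_log_form; auto; [apply equilibrium1 | apply equilibrium2].
Qed.

Lemma is_derive_xy t : 0 < t ->
  is_derive x t (F1 t * al1 + F2 t * al2) /\ is_derive y t (F1 t * be1 + F2 t * be2).
Proof.
  intros Ht. destruct (fluxes_eq t ltac:(lra)) as [E1 E2].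
  rewrite <- E1, <- E2. now apply (proj2 sol).
Qed.

Lemma is_derive_G t : 0 < t -> is_derive G t (dG t).
Proof.
  intros Ht. destruct (xy_pos t ltac:(lra)) as [Hx Hy].
  destruct (is_derive_xy t Ht) as [Dx Dy].
  replace (dG t) with (plus ((ln (x t) - us) * (F1 t * al1 + F2 t * al2))
                            ((ln (y t) - ws) * (F1 t * be1 + F2 t * be2)))
    by (unfold dG, ph1, ph2, u, w, plus; simpl; ring).
  apply (is_derive_plus (fun t => exp us * helm (ln (x t) - us))
                        (fun t => exp ws * helm (ln (y t) - ws)));
    now apply is_derive_helm_log.
Qed.

Lemma dG_eq t :
  dG t = - (P1 t * ((exp (ph1 t) - 1) * ph1 t)) - P2 t * ((exp (ph2 t) - 1) * ph2 t).
Proof. unfold dG, F1, F2. ring. Qed.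

Lemma dG_le_0 t : dG t <= 0.
Proof.
  rewrite dG_eq. destruct (P_pos t).
  pose proof (exp_sub_1_mul_nonneg (ph1 t)). pose proof (exp_sub_1_mul_nonneg (ph2 t)).
  nra.
Qed.

Lemma G_nonneg t : 0 <= G t.
Proof.
  unfold G. pose proof (helm_nonneg (u t)). pose proof (helm_nonneg (w t)).
  pose proof (exp_pos us). pose proof (exp_pos ws). nra.
Qed.

Lemma helm_gaps_le_G t : exp us * helm (u t) <= G t /\ exp ws * helm (w t) <= G t.
Proof.
  unfold G. pose proof (helm_nonneg (u t)). pose proof (helm_nonneg (w t)).
  pose proof (exp_pos us). pose proof (exp_pos ws). split; nra.
Qed.

Lemma G_nonincreasing s t : 0 < s -> s <= t -> G t <= G s.
Proof.
  intros Hs Hst.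
  apply (nonincreasing_of_derive_nonpos G dG s); [| intros; apply dG_le_0 | lra].
  intros r Hr. apply is_derive_G. lra.
Qed.

Lemma log_gap_le : exists U, 0 <= U /\ forall t, 1 <= t -> u t <= U /\ w t <= U.
Proof.
  pose proof (exp_pos us). pose proof (exp_pos ws). pose proof (G_nonneg 1).
  assert (0 <= G 1 / exp us) by (apply Rdiv_le_0_compat; lra).
  assert (0 <= G 1 / exp ws) by (apply Rdiv_le_0_compat; lra).
  exists (1 + G 1 / exp us + G 1 / exp ws). split; [lra |]. intros t Ht.
  pose proof (G_nonincreasing 1 t ltac:(lra) Ht). destruct (helm_gaps_le_G t).
  pose proof (le_of_helm_le (exp us) (u t) (G 1) ltac:(lra) ltac:(lra)).
  pose proof (le_of_helm_le (exp ws) (w t) (G 1) ltac:(lra) ltac:(lra)).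
  lra.
Qed.

(* Once [G] drops below its value [exp us + exp ws] at the corner [u = w = -oo],
   the corner stays out of reach; if it never does, one gap is always [>= 1]. *)
Lemma log_gap_one_ge :
  exists t0 N, 1 <= t0 /\ 0 <= N /\ forall t, t0 <= t -> - N <= u t \/ - N <= w t.
Proof.
  pose proof (exp_pos us). pose proof (exp_pos ws).
  destruct (classic (exists t1, 1 <= t1 /\ G t1 < exp us + exp ws))
    as [[t1 [Ht1 HG]] | Hnever].
  - destruct (helm_pair_deep (exp us) (exp ws) (exp us + exp ws - G t1))
      as [N [HN Hdeep]]; [lra | lra | lra |].
    exists t1, N. split; [lra | split; [lra |]]. intros t Ht.
    destruct (Rlt_le_dec (u t) (- N)) as [Hu |]; [| now left].
    destruct (Rlt_le_dec (w t) (- N)) as [Hw |]; [| now right].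
    pose proof (Hdeep _ _ Hu Hw). pose proof (G_nonincreasing t1 t ltac:(lra) Ht).
    unfold G in *. lra.
  - exists 1, 0. split; [lra | split; [lra |]]. intros t Ht.
    destruct (Rlt_le_dec (u t) 1) as [Hu |]; [| left; lra].
    destruct (Rlt_le_dec (w t) 1) as [Hw |]; [| right; lra].
    exfalso. apply Hnever. exists t. split; [lra |].
    pose proof (helm_lt_1 _ Hu). pose proof (helm_lt_1 _ Hw). unfold G. nra.
Qed.

Lemma u_ge_of_w_bounded t0 N W : 1 <= t0 ->
  (forall t, t0 <= t -> u t < - N -> Rabs (w t) <= W) ->
  exists M, forall t, t0 <= t -> M <= u t.
Proof.
  intros Ht0 Hw. destruct (flux_sum_pos_far al1 be1 al2 be2 W D_neq_0) as [L HL].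
  pose proof (Rmax_l N L). pose proof (Rmax_r N L).
  exists (Rmin (ln (x t0)) (us - Rmax N L) - us). intros t Ht.
  enough (Rmin (ln (x t0)) (us - Rmax N L) <= ln (x t)) by (unfold u; lra).
  apply (ln_lower_barrier x (fun t => F1 t * al1 + F2 t * al2)); [| | | exact Ht].
  - intros r Hr. apply xy_pos. lra.
  - intros r Hr. apply is_derive_xy. lra.
  - intros r Hr Hlow. destruct (P_pos r).
    apply HL; auto; [apply Hw |]; unfold u; lra.
Qed.

Lemma w_ge_of_u_bounded t0 N W : 1 <= t0 ->
  (forall t, t0 <= t -> w t < - N -> Rabs (u t) <= W) ->
  exists M, forall t, t0 <= t -> M <= w t.
Proof.
  intros Ht0 Hu.
  assert (HD : be1 * al2 - be2 * al1 <> 0) by (intros E; apply D_neq_0; unfold D; lra).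
  destruct (flux_sum_pos_far be1 al1 be2 al2 W HD) as [L HL].
  pose proof (Rmax_l N L). pose proof (Rmax_r N L).
  exists (Rmin (ln (y t0)) (ws - Rmax N L) - ws). intros t Ht.
  enough (Rmin (ln (y t0)) (ws - Rmax N L) <= ln (y t)) by (unfold w; lra).
  apply (ln_lower_barrier y (fun t => F1 t * be1 + F2 t * be2)); [| | | exact Ht].
  - intros r Hr. apply xy_pos. lra.
  - intros r Hr. apply is_derive_xy. lra.
  - intros r Hr Hlow. destruct (P_pos r).
    unfold F1, F2, ph1, ph2.
    rewrite (Rplus_comm (al1 * u r)), (Rplus_comm (al2 * u r)).
    apply HL; auto; [apply Hu |]; unfold w; lra.
Qed.

Lemma log_gap_bounded :
  exists t0 L, 1 <= t0 /\ forall t, t0 <= t -> Rabs (u t) <= L /\ Rabs (w t) <= L.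
Proof.
  destruct log_gap_le as [U [HU Hle]].
  destruct log_gap_one_ge as [t0 [N [Ht0 [HN Hone]]]].
  assert (Hother : forall t, t0 <= t -> - N <= u t <= U \/ - N <= w t <= U).
  { intros t Ht. destruct (Hle t ltac:(lra)). destruct (Hone t Ht); [left | right]; lra. }
  destruct (u_ge_of_w_bounded t0 N (N + U)) as [Mx HMx]; [exact Ht0 | |].
  { intros t Ht Hu. apply Rabs_le_between. destruct (Hother t Ht); lra. }
  destruct (w_ge_of_u_bounded t0 N (N + U)) as [My HMy]; [exact Ht0 | |].
  { intros t Ht Hw. apply Rabs_le_between. destruct (Hother t Ht); lra. }
  exists t0, (Rabs Mx + Rabs My + U). split; [exact Ht0 |]. intros t Ht.
  pose proof (Rle_abs (- Mx)). pose proof (Rle_abs (- My)). rewrite !Rabs_Ropp in *.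
  pose proof (Rabs_pos Mx). pose proof (Rabs_pos My).
  destruct (Hle t ltac:(lra)). pose proof (HMx t Ht). pose proof (HMy t Ht).
  split; apply Rabs_le_between; lra.
Qed.

Section BoundedGaps.

Variables t0 L : R.
Hypothesis t0_ge_1 : 1 <= t0.
Hypothesis gaps_bounded : forall t, t0 <= t -> Rabs (u t) <= L /\ Rabs (w t) <= L.

Lemma P_ge : exists p, 0 < p /\ forall t, t0 <= t -> p <= P1 t /\ p <= P2 t.
Proof.
  pose (B := Rabs us + Rabs ws + L).
  exists (Rmin (k1 * exp (- ((Rabs a1 + Rabs b1) * B)))
               (k3 * exp (- ((Rabs a2 + Rabs b2) * B)))).
  split; [apply Rmin_glb_lt; apply Rmult_lt_0_compat; auto; apply exp_pos |].
  intros t Ht. destruct (gaps_bounded t Ht) as [Hu Hw].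
  assert (Hx : Rabs (ln (x t)) <= B).
  { replace (ln (x t)) with (us + u t) by (unfold u; ring).
    pose proof (Rabs_triang us (u t)). pose proof (Rabs_pos ws). unfold B. lra. }
  assert (Hy : Rabs (ln (y t)) <= B).
  { replace (ln (y t)) with (ws + w t) by (unfold w; ring).
    pose proof (Rabs_triang ws (w t)). pose proof (Rabs_pos us). unfold B. lra. }
  pose proof (proj1 (Rabs_le_between _ _) (Rabs_lin_le a1 b1 _ _ _ Hx Hy)).
  pose proof (proj1 (Rabs_le_between _ _) (Rabs_lin_le a2 b2 _ _ _ Hx Hy)).
  split; [eapply Rle_trans; [apply Rmin_l |] | eapply Rle_trans; [apply Rmin_r |]];
    apply Rmult_le_compat_l; try lra; apply exp_le_exp; lra.
Qed.

Lemma dG_le_neg_ph_sq :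
  exists k, 0 < k /\ forall t, t0 <= t -> dG t <= - k * (ph1 t ^ 2 + ph2 t ^ 2).
Proof.
  destruct P_ge as [p [Hp HP]].
  pose (Phi := (Rabs al1 + Rabs be1 + Rabs al2 + Rabs be2) * L).
  exists (p * exp (- Phi)). split; [apply Rmult_lt_0_compat; [exact Hp | apply exp_pos] |].
  intros t Ht. destruct (gaps_bounded t Ht) as [Hu Hw]. destruct (HP t Ht) as [Hp1 Hp2].
  assert (HL : 0 <= L) by (pose proof (Rabs_pos (u t)); lra).
  pose proof (Rabs_pos al1). pose proof (Rabs_pos be1).
  pose proof (Rabs_pos al2). pose proof (Rabs_pos be2).
  assert (Hph1 : exp (- Phi) * ph1 t ^ 2 <= (exp (ph1 t) - 1) * ph1 t).
  { apply exp_sub_1_mul_ge. eapply Rle_trans; [apply (Rabs_lin_le _ _ _ _ _ Hu Hw) |].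
    unfold Phi. nra. }
  assert (Hph2 : exp (- Phi) * ph2 t ^ 2 <= (exp (ph2 t) - 1) * ph2 t).
  { apply exp_sub_1_mul_ge. eapply Rle_trans; [apply (Rabs_lin_le _ _ _ _ _ Hu Hw) |].
    unfold Phi. nra. }
  pose proof (exp_pos (- Phi)). pose proof (pow2_ge_0 (ph1 t)). pose proof (pow2_ge_0 (ph2 t)).
  assert (p * (exp (- Phi) * ph1 t ^ 2) <= P1 t * ((exp (ph1 t) - 1) * ph1 t))
    by (apply Rmult_le_compat; nra).
  assert (p * (exp (- Phi) * ph2 t ^ 2) <= P2 t * ((exp (ph2 t) - 1) * ph2 t))
    by (apply Rmult_le_compat; nra).
  rewrite dG_eq. lra.
Qed.

Lemma dG_le_neg_sq : exists k, 0 < k /\ forall t, t0 <= t -> dG t <= - k * (u t ^ 2 + w t ^ 2).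
Proof.
  destruct dG_le_neg_ph_sq as [k [Hk Hdiss]].
  pose (Sq := al1 ^ 2 + be1 ^ 2 + al2 ^ 2 + be2 ^ 2).
  assert (HSq : 0 <= Sq) by (unfold Sq; nra).
  assert (HD2 : 0 < D ^ 2) by (apply pow2_gt_0; exact D_neq_0).
  exists (k * D ^ 2 / (Sq + 1)). split; [apply Rdiv_lt_0_compat; nra |].
  intros t Ht. pose proof (Hdiss t Ht).
  pose proof (det_sq_mul_norm_le al1 be1 al2 be2 (u t) (w t)) as Hcs.
  change (D ^ 2 * (u t ^ 2 + w t ^ 2) <= Sq * (ph1 t ^ 2 + ph2 t ^ 2)) in Hcs.
  assert (Hdiv : D ^ 2 * (u t ^ 2 + w t ^ 2) / (Sq + 1) <= ph1 t ^ 2 + ph2 t ^ 2).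
  { apply Rle_div_l; [lra |]. pose proof (pow2_ge_0 (ph1 t)). pose proof (pow2_ge_0 (ph2 t)).
    nra. }
  replace (- (k * D ^ 2 / (Sq + 1)) * (u t ^ 2 + w t ^ 2))
    with (- (k * (D ^ 2 * (u t ^ 2 + w t ^ 2) / (Sq + 1)))) by (field; lra).
  pose proof (Rmult_le_compat_l _ _ _ (Rlt_le _ _ Hk) Hdiv). lra.
Qed.

Lemma G_le_sq t : t0 <= t -> G t <= exp L / 2 * (exp us + exp ws) * (u t ^ 2 + w t ^ 2).
Proof.
  intros Ht. destruct (gaps_bounded t Ht) as [Hu Hw].
  destruct (helm_sq_bounds _ _ Hu) as [_ Hhu]. destruct (helm_sq_bounds _ _ Hw) as [_ Hhw].
  pose proof (exp_pos us). pose proof (exp_pos ws). pose proof (exp_pos L).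
  pose proof (pow2_ge_0 (u t)). pose proof (pow2_ge_0 (w t)).
  pose proof (Rmult_le_compat_l _ _ _ (Rlt_le _ _ (exp_pos us)) Hhu).
  pose proof (Rmult_le_compat_l _ _ _ (Rlt_le _ _ (exp_pos ws)) Hhw).
  assert (0 <= exp L * exp us * w t ^ 2) by (apply Rmult_le_pos; nra).
  assert (0 <= exp L * exp ws * u t ^ 2) by (apply Rmult_le_pos; nra).
  unfold G. nra.
Qed.

Lemma G_vanishes : is_lim G p_infty 0.
Proof.
  destruct dG_le_neg_sq as [k [Hk HdG]].
  pose (C := exp L / 2 * (exp us + exp ws)).
  assert (HC : 0 < C) by (unfold C; pose proof (exp_pos L); pose proof (exp_pos us);
                          pose proof (exp_pos ws); nra).
  apply (is_lim_0_of_derive_le_neg G dG t0 (k / C)); [now apply Rdiv_lt_0_compat | | |].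
  - intros t Ht. apply is_derive_G. lra.
  - intros t _. apply G_nonneg.
  - intros t Ht. pose proof (HdG t Ht). pose proof (G_le_sq t Ht) as HG. fold C in HG.
    assert (k / C * G t <= k * (u t ^ 2 + w t ^ 2)).
    { replace (k * (u t ^ 2 + w t ^ 2)) with (k / C * (C * (u t ^ 2 + w t ^ 2)))
        by (field; lra).
      apply Rmult_le_compat_l; [apply Rlt_le, Rdiv_lt_0_compat |]; lra. }
    lra.
Qed.

Lemma is_lim_ln_xy :
  is_lim (fun t => ln (x t)) p_infty us /\ is_lim (fun t => ln (y t)) p_infty ws.
Proof.
  split; [apply (is_lim_of_sq_le _ G us (2 * exp L / exp us) t0) |
          apply (is_lim_of_sq_le _ G ws (2 * exp L / exp ws) t0)];
    try exact G_vanishes; intros t Ht;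
    destruct (gaps_bounded t Ht); destruct (helm_gaps_le_G t);
    apply sq_le_of_helm_le; auto; apply exp_pos.
Qed.

End BoundedGaps.

Theorem mass_action_converges :
  exists p q, 0 < p /\ 0 < q /\
    mono p q al1 be1 = k1 / k2 /\ mono p q al2 be2 = k3 / k4 /\
    is_lim x p_infty p /\ is_lim y p_infty q.
Proof.
  destruct log_gap_bounded as [t0 [L [Ht0 Hgaps]]].
  destruct (is_lim_ln_xy t0 L Ht0 Hgaps) as [Hx Hy].
  assert (Hratio : forall kp km, 0 < kp -> 0 < km -> exp (ln kp - ln km) = kp / km).
  { intros kp km Hp Hm. unfold Rminus. rewrite exp_plus, exp_Ropp, !exp_ln; auto. }
  exists (exp us), (exp ws).
  split; [apply exp_pos | split; [apply exp_pos |]].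
  rewrite !mono_exp, equilibrium1, equilibrium2, !Hratio by assumption.
  split; [reflexivity | split; [reflexivity |]].
  split; apply is_lim_of_is_lim_ln; auto; intros t Ht; apply xy_pos, Ht.
Qed.

End MassAction.

Theorem lemma4p1 (a1 b1 a1' b1' a2 b2 a2' b2' eps : R) :
  0 <= a1 -> 0 <= b1 -> 0 <= a1' -> 0 <= b1' ->
  0 <= a2 -> 0 <= b2 -> 0 <= a2' -> 0 <= b2' ->
  lin_indep2 (a1' - a1) (b1' - b1) (a2' - a2) (b2' - b2) ->
  0 < eps < 1 ->
  (* (i) : limit A = C2 /\ C4 *)
  (forall x y : R -> R,
     is_solution a1 b1 a1' b1' a2 b2 a2' b2' eps (/ eps) (/ eps) eps x y ->
     converges_to_intersection a1 b1 a1' b1' a2 b2 a2' b2' (eps ^ 2) (/ eps ^ 2) x y) /\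
  (* (ii) : limit B = C1 /\ C4 *)
  (forall x y : R -> R,
     is_solution a1 b1 a1' b1' a2 b2 a2' b2' (/ eps) eps (/ eps) eps x y ->
     converges_to_intersection a1 b1 a1' b1' a2 b2 a2' b2' (/ eps ^ 2) (/ eps ^ 2) x y) /\
  (* (iii) : limit C = C1 /\ C3 *)
  (forall x y : R -> R,
     is_solution a1 b1 a1' b1' a2 b2 a2' b2' (/ eps) eps eps (/ eps) x y ->
     converges_to_intersection a1 b1 a1' b1' a2 b2 a2' b2' (/ eps ^ 2) (eps ^ 2) x y) /\
  (* (iv) : limit D = C2 /\ C3 *)
  (forall x y : R -> R,
     is_solution a1 b1 a1' b1' a2 b2 a2' b2' eps (/ eps) eps (/ eps) x y ->
     converges_to_intersection a1 b1 a1' b1' a2 b2 a2' b2' (eps ^ 2) (eps ^ 2) x y).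
Proof.
  intros _ _ _ _ _ _ _ _ Hindep Heps.
  pose proof (det_neq_0_of_lin_indep2 _ _ _ _ Hindep) as HD.
  assert (He : 0 < eps) by lra. pose proof (Rinv_0_lt_compat eps He) as Hie.
  assert (Hsmall : eps / / eps = eps ^ 2) by (field; lra).
  assert (Hlarge : / eps / eps = / eps ^ 2) by (field; lra).
  unfold converges_to_intersection.
  repeat split; intros x y Hsol;
    [rewrite <- Hlarge, <- Hsmall | rewrite <- Hlarge | rewrite <- Hlarge, <- Hsmall
    | rewrite <- Hsmall];
    now apply mass_action_converges.
Qed.
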